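(* Let $n\ge k\ge1$, $m\ge1$. Let $(a_j,b_j)_{j\in[m]}$ be pairs with $a_j\in\mathbb{F}_2^n\setminus\{0\}$, $b_j\in\mathbb{F}_2$, and let $\varphi_j$ be the linear form $y\mapsto\langle a_j,y\rangle$. For each $j$ independently: choose $(\gamma_{j,1},\dots,\gamma_{j,k-1})$ uniformly among $(k-1)$-tuples of linear forms such that $\gamma_{j,1},\dots,\gamma_{j,k-1},\varphi_j$ are linearly independent; choose $\beta_{j,1},\dots,\beta_{j,k-1}\in\mathbb{F}_2$ uniformly and independently; choose a uniformly random permutation and let $(\ell_{j,1},\dots,\ell_{j,k})$ be $(\gamma_{j,1},\dots,\gamma_{j,k-1},\varphi_j)$ in that order and $(\varepsilon_{j,1},\dots,\varepsilon_{j,k})$ be $(\beta_{j,1},\dots,\beta_{j,k-1},1-b_j)$ in the same order; set $V_j=\{x:\ell_{j,i}(x)=\varepsilon_{j,i}\ \forall i\in[k]\}$ and $V=(V_1,\dots,V_m)$. Then: (i) if the $a_j$ are i.i.d. uniform on $\mathbb{F}_2^n\setminus\{0\}$ and the $b_j$ are i.i.d. uniform on $\mathbb{F}_2$ independent of them, then $V\sim\mathbf{P}_{\text{unif}}$; (ii) if the $a_j$ are i.i.d. uniform on $\mathbb{F}_2^n\setminus\{0\}$ and $b_j=\langle a_j,x\rangle+e_j$ for a fixed $x\in\mathbb{F}_2^n$ and i.i.d. $e_j\sim\mathrm{Bernoulli}(\eta)$ independent of the $a_j$, with $\eta\in[0,1/2)$, then $V\sim\mathbf{P}_{x,\pi}$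 with $\pi=1-2\eta$.
   Context: A $k$-flat of $\mathbb{F}_2^n$ is an affine subspace of dimension $n-k$. $q_0$ is the uniform distribution on $k$-flats; for $x\in\mathbb{F}_2^n$, $q_x$ is the uniform distribution on $k$-flats not containing $x$, and $q_{x,\pi}:=(1-\pi)q_0+\pi q_x$. $\mathbf{P}_{\text{unif}}=q_0^{\otimes m}$ and $\mathbf{P}_{x,\pi}=q_{x,\pi}^{\otimes m}$. *)

(* Finite probability spaces are represented by explicit
   weighted finite sums with weights in an arbitrary real field R. *)
From HB Require Import structures.
From mathcomp Require Import all_boot all_order all_algebra all_fingroup.
Set Implicit Arguments. Unset Strict Implicit. Unset Printing Implicit Defensive.
Import Order.TTheory GRing.Theory Num.Theory.
Local Open Scope ring_scope.

Definition dotF2 (n : nat) (u y : 'rV['F_2]_n) : 'F_2 := \sum_(i < n) u 0 i * y 0 i.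

Definition is_kflat (n k : nat) (S : {set 'rV['F_2]_n}) : bool :=
  [exists x0 : 'rV['F_2]_n, exists U : 'M['F_2]_n,
     (\rank U == (n - k)%N) &&
     (S == [set x0 + u | u in [set u : 'rV['F_2]_n | (u <= U)%MS]])].

Definition kflats (n k : nat) : {set {set 'rV['F_2]_n}} := [set S | is_kflat k S].

Definition unif (R : numFieldType) (T : finType) (A : {set T}) (x : T) : R :=
  if x \in A then (#|A|%:R)^-1 else 0.

Definition bern (R : numFieldType) (eta : R) (e : 'F_2) : R :=
  if e == 1 then eta else 1 - eta.

Definition q0 (R : numFieldType) (n k : nat) (S : {set 'rV['F_2]_n}) : R :=
  @unif R _ (kflats n k) S.
Definition qx (R : numFieldType) (n k : nat) (x : 'rV['F_2]_n) (S : {set 'rV['F_2]_n}) : R :=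
  @unif R _ [set T in kflats n k | x \notin T] S.
Definition qxpi (R : numFieldType) (n k : nat) (x : 'rV['F_2]_n) (pi : R)
  (S : {set 'rV['F_2]_n}) : R :=
  (1 - pi) * @q0 R n k S + pi * @qx R n k x S.

Definition P_unif (R : numFieldType) (n k m : nat) (W : {ffun 'I_m -> {set 'rV['F_2]_n}}) : R :=
  \prod_(j < m) @q0 R n k (W j).
Definition P_xpi (R : numFieldType) (n k m : nat) (x : 'rV['F_2]_n) (pi : R)
  (W : {ffun 'I_m -> {set 'rV['F_2]_n}}) : R :=
  \prod_(j < m) @qxpi R n k x pi (W j).

Definition nonzero_vecs (n : nat) : {set 'rV['F_2]_n} := [set a | a != 0].

Definition indep_ok (n k : nat) (a : 'rV['F_2]_n) (G : k.-1.-tuple 'rV['F_2]_n) : bool :=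
  row_free (\matrix_(i < k, j < n) (nth 0 (rcons (tval G) a) i) 0 j).

Definition gamma_set (n k : nat) (a : 'rV['F_2]_n) : {set k.-1.-tuple 'rV['F_2]_n} :=
  [set G | @indep_ok n k a G].

Definition Vj (n k : nat) (a : 'rV['F_2]_n) (b : 'F_2) (G : k.-1.-tuple 'rV['F_2]_n)
  (beta : k.-1.-tuple 'F_2) (s : {perm 'I_k}) : {set 'rV['F_2]_n} :=
  [set y | [forall i : 'I_k,
     dotF2 (nth 0 (rcons (tval G) a) (s i)) y == nth 0 (rcons (tval beta) (1 - b)) (s i)]].

Definition law_i (R : numFieldType) (n k m : nat) (W : {ffun 'I_m -> {set 'rV['F_2]_n}}) : R :=
  \sum_(A : {ffun 'I_m -> 'rV['F_2]_n})
  \sum_(B : {ffun 'I_m -> 'F_2})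
  \sum_(G : {ffun 'I_m -> k.-1.-tuple 'rV['F_2]_n})
  \sum_(Bt : {ffun 'I_m -> k.-1.-tuple 'F_2})
  \sum_(S : {ffun 'I_m -> {perm 'I_k}})
    (\prod_(j < m) (@unif R _ (nonzero_vecs n) (A j) * @unif R _ [set: 'F_2] (B j)
        * @unif R _ (@gamma_set n k (A j)) (G j) * @unif R _ [set: k.-1.-tuple 'F_2] (Bt j)
        * @unif R _ [set: {perm 'I_k}] (S j)))
    * ([forall j, @Vj n k (A j) (B j) (G j) (Bt j) (S j) == W j] : bool)%:R.

Definition law_ii (R : numFieldType) (n k m : nat) (x : 'rV['F_2]_n) (eta : R)
  (W : {ffun 'I_m -> {set 'rV['F_2]_n}}) : R :=
  \sum_(A : {ffun 'I_m -> 'rV['F_2]_n})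
  \sum_(E : {ffun 'I_m -> 'F_2})
  \sum_(G : {ffun 'I_m -> k.-1.-tuple 'rV['F_2]_n})
  \sum_(Bt : {ffun 'I_m -> k.-1.-tuple 'F_2})
  \sum_(S : {ffun 'I_m -> {perm 'I_k}})
    (\prod_(j < m) (@unif R _ (nonzero_vecs n) (A j) * @bern R eta (E j)
        * @unif R _ (@gamma_set n k (A j)) (G j) * @unif R _ [set: k.-1.-tuple 'F_2] (Bt j)
        * @unif R _ [set: {perm 'I_k}] (S j)))
    * ([forall j, @Vj n k (A j) (dotF2 (A j) x + E j) (G j) (Bt j) (S j) == W j] : bool)%:R.

(* The permutation does not change V_j, so V_j is the solution set of k independent
   affine equations, and the coordinates j are independent; it suffices to find the
   law of one V_j.  The random system is equivariant under the affine group: moving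
   (a, b, gamma, beta) along y |-> y P + c moves the solution flat along the same map
   and preserves the joint law.  Without noise (b = <a, x>) the last equation fails at x,
   so the law is supported on the k-flats avoiding x and invariant under the affine maps
   fixing x; these act transitively on such flats (transvections suffice), so the law is
   q_x.  A uniform b is the average of the noise values e = 0 and e = 1 for every x, which
   yields q_0 by the same argument without a fixed point; hence e = 1 gives 2 q_0 - q_x,
   and Bernoulli(eta) noise gives (1 - pi) q_0 + pi q_x with pi = 1 - 2 eta. *)

From HB Require Import structures.
From mathcomp Require Import all_boot all_order all_algebra all_fingroup.
From mathcomp Require Import ring.
Set Implicit Arguments. Unset Strict Implicit. Unset Printing Implicit Defensive.
Import Order.TTheory GRing.Theory Num.Theory.
Local Open Scope ring_scope.

Lemma pchar_F2 : (2 \in [pchar 'F_2])%N.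
Proof. exact: pchar_Fp. Qed.

Lemma F2P (x : 'F_2) : x = 0 \/ x = 1.
Proof. by case: x => [[|[|//]]] i; [left|right]; apply/val_inj. Qed.

Lemma sum_F2 (V : nmodType) (f : 'F_2 -> V) : \sum_x f x = f 0 + f 1.
Proof.
rewrite (bigD1 0) // (bigD1 1) //= [X in _ + (_ + X)]big1 ?addr0 // => x /andP [x1 x0].
by case: (F2P x) => ex; rewrite ex eqxx ?andbF in x1 x0.
Qed.

Section Dot.
Variable n : nat.
Implicit Types u v y : 'rV['F_2]_n.

Lemma dotF2E u y : dotF2 u y = (u *m y^T) 0 0.
Proof. by rewrite /dotF2 mxE; apply: eq_bigr => i _; rewrite mxE. Qed.

Lemma dotF2C u y : dotF2 u y = dotF2 y u.
Proof. by rewrite /dotF2; apply: eq_bigr => i _; rewrite mulrC. Qed.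

Lemma dotF2_mulmxr u v (M : 'M['F_2]_n) : dotF2 u (v *m M) = dotF2 (u *m M^T) v.
Proof. by rewrite !dotF2E trmx_mul mulmxA. Qed.

Lemma dotF2Dr u v y : dotF2 u (v + y) = dotF2 u v + dotF2 u y.
Proof. by rewrite !dotF2E linearD /= mulmxDr !mxE. Qed.

Lemma dotF2Dl u v y : dotF2 (u + v) y = dotF2 u y + dotF2 v y.
Proof. by rewrite dotF2C dotF2Dr !(dotF2C y). Qed.

Lemma dotF2Br u v y : dotF2 u (v - y) = dotF2 u v - dotF2 u y.
Proof. by rewrite !dotF2E linearB /= mulmxBr !mxE. Qed.

Lemma dotF2_delta (j : 'I_n) y : dotF2 'e_j y = y 0 j.
Proof.
rewrite /dotF2 (bigD1 j) //= big1 ?addr0 => [|l /negPf lj]; first by rewrite mxE !eqxx mul1r.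
by rewrite mxE lj andbF mul0r.
Qed.

Lemma dotF2_mx11 u y : u *m y^T = (dotF2 u y)%:M :> 'M_1.
Proof. by apply/matrixP => i j; rewrite !ord1 dotF2E !mxE eqxx mulr1n. Qed.

End Dot.

Section Uniform.
Variables (R : numFieldType) (T : finType).
Implicit Types A B : {set T}.

Lemma sum_unif A : A != set0 -> \sum_x @unif R T A x = 1.
Proof.
move=> An0; rewrite /unif -big_mkcond /= sumr_const.
by rewrite -[_ *+ _]mulr_natr mulVf // pnatr_eq0 -lt0n card_gt0.
Qed.

Lemma unif_preimset A B (f : T -> T) x :
  injective f -> f @^-1: A = B -> @unif R T A (f x) = @unif R T B x.
Proof. by move=> f_inj <-; rewrite /unif card_preimset // inE. Qed.

Lemma unif_const (P : T -> R) A c :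
  (forall x, P x = if x \in A then c else 0) -> \sum_x P x = 1 ->
  forall x, P x = @unif R T A x.
Proof.
move=> PE P1 x; rewrite PE /unif; case: ifP => // xA.
have cA : c * #|A|%:R = 1.
  by rewrite mulr_natr -sumr_const -P1 big_mkcond /=; apply: eq_bigr => y _; rewrite PE.
have A0 : (#|A|%:R : R) != 0 by apply: contra_eq_neq cA => ->; rewrite mulr0 eq_sym oner_neq0.
by rewrite -[c](mulfK A0) cA mul1r.
Qed.

End Uniform.

Lemma unif_F2 (R : numFieldType) (b : 'F_2) : @unif R _ [set: 'F_2] b = 2^-1.
Proof. by rewrite /unif inE cardsT card_Fp. Qed.

Lemma mulmx_pid_mxE (S : pzSemiRingType) m n r (u : 'M[S]_(m, n)) i (j : 'I_n) :
  (u *m pid_mx r) i j = u i j * ((j < r)%N)%:R.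
Proof.
rewrite mxE (bigD1 j) //= big1 ?addr0 => [|l /negPf lj]; first by rewrite mxE eqxx.
rewrite mxE; case: eqP => [/val_inj jl|_]; last by rewrite mulr0.
by rewrite jl eqxx in lj.
Qed.

Lemma addmx_F2 m p (A : 'M['F_2]_(m, p)) : A + A = 0.
Proof. by apply/matrixP => i j; rewrite !mxE addrr_pchar2 // pchar_F2. Qed.

Section Flats.
Variable n : nat.
Local Notation vec := 'rV['F_2]_n.

Definition affine_image (P : 'M['F_2]_n) (c : vec) (W : {set vec}) : {set vec} :=
  [set z | (z - c) *m invmx P \in W].

Lemma affine_image_inj (P : 'M['F_2]_n) c : P \in unitmx -> injective (affine_image P c).
Proof.
move=> Pu W1 W2 eqW; apply/setP => y.
have := congr1 (fun W : {set vec} => y *m P + c \in W) eqW; rewrite !inE addrK mulmxK //.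
Qed.

Definition std_flat (k : nat) : {set vec} := [set u | (u <= (pid_mx (n - k) : 'M_n))%MS].

Lemma mem_std_flat k u :
  (u \in std_flat k) = [forall j : 'I_n, (n - k <= j)%N ==> (u 0 j == 0)].
Proof.
rewrite inE; apply/idP/forallP => [/submxP [D ->] j|u0].
  rewrite -(pid_mx_id _ _ _ (leq_subr k n)) mulmxA mulmx_pid_mxE.
  by apply/implyP; rewrite leqNgt => /negPf ->; rewrite mulr0.
suff uE : u *m pid_mx (n - k) = u by rewrite -uE submxMl.
apply/rowP => j; rewrite mulmx_pid_mxE; case: ltnP => [_|le_j]; first by rewrite mulr1.
by rewrite (eqP (implyP (u0 j) le_j)) mul0r.
Qed.

Lemma kflat_affine_std k W :
  is_kflat k W -> exists2 P, P \in unitmx & exists c, W = affine_image P c (std_flat k).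
Proof.
case/existsP => c /existsP [U /andP [/eqP rkU /eqP ->]].
exists (row_ebase U); first exact: row_ebase_unit.
exists c; apply/setP => z; rewrite !inE.
have full_col : row_full (col_ebase U) by rewrite row_full_unit col_ebase_unit.
have eqU := eqmxMfull (pid_mx (\rank U) *m row_ebase U) full_col.
rewrite mulmxA mulmx_ebase in eqU.
have -> : (z \in [set c + u | u in [set u | (u <= U)%MS]]) = (z - c <= U)%MS.
  apply/imsetP/idP => [[u uU ->]|zU]; first by move: uU; rewrite inE addrC addKr.
  by exists (z - c); rewrite ?inE // addrC subrK.
by rewrite eqU -{1}[z - c](mulmxKV (row_ebase_unit U)) submxMfree ?row_free_unit ?row_ebase_unit // rkU.
Qed.

Definition transvection (h d : vec) : 'M['F_2]_n := 1%:M + h^T *m d.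

Section Transvection.
Variables h d : vec.
Hypothesis hd : dotF2 h d = 0.

Lemma transvection_fix e : dotF2 h e = 0 -> e *m transvection h d = e.
Proof. by move=> he; rewrite mulmxDr mulmx1 mulmxA dotF2_mx11 dotF2C he mul_scalar_mx scale0r addr0. Qed.

Lemma transvection_shift u : dotF2 h u = 1 -> u *m transvection h d = u + d.
Proof. by move=> hu; rewrite mulmxDr mulmx1 mulmxA dotF2_mx11 dotF2C hu mul1mx. Qed.

Lemma transvection_unit : transvection h d \in unitmx.
Proof.
suff /mulmx1_unit [] : transvection h d *m transvection h d = 1%:M by [].
rewrite {1}/transvection mulmxDl mul1mx -mulmxA transvection_fix // -addrA.
by rewrite addmx_F2 addr0.
Qed.

End Transvection.

Lemma exists_form_on (J : {set 'I_n}) (p q : vec) :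
  (exists2 j, j \in J & p 0 j = 1) -> (exists2 j, j \in J & q 0 j = 1) ->
  exists h : vec, [/\ forall j, j \notin J -> h 0 j = 0, dotF2 h p = 1 & dotF2 h q = 1].
Proof.
move=> [j jJ pj] [l lJ ql].
have deltaJ i : i \in J -> forall j', j' \notin J -> ('e_i : vec) 0 j' = 0.
  by move=> iJ j' j'J; rewrite mxE eqxx /=; case: eqP => // ji; rewrite ji iJ in j'J.
have [qj|qj] := F2P (q 0 j); last first.
  by exists 'e_j; split; rewrite ?dotF2_delta //; apply: deltaJ.
have [pl|pl] := F2P (p 0 l); last first.
  by exists 'e_l; split; rewrite ?dotF2_delta //; apply: deltaJ.
exists ('e_j + 'e_l); split; last 2 first.
- by rewrite dotF2Dl !dotF2_delta pj pl addr0.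
- by rewrite dotF2Dl !dotF2_delta qj ql add0r.
by move=> j' j'J; rewrite mxE (deltaJ j) ?(deltaJ l) ?addr0.
Qed.

Lemma exists_unitmx_fixing (J : {set 'I_n}) (p q : vec) :
  (exists2 j, j \in J & p 0 j = 1) -> (exists2 j, j \in J & q 0 j = 1) ->
  exists2 P : 'M['F_2]_n, P \in unitmx &
    (forall e : vec, (forall j, j \in J -> e 0 j = 0) -> e *m P = e) /\ q *m P = p.
Proof.
move=> pJ qJ; have [h [hJ hp hq]] := exists_form_on pJ qJ.
have hd : dotF2 h (p - q) = 0 by rewrite dotF2Br hp hq subrr.
exists (transvection h (p - q)); first exact: transvection_unit.
split; last by rewrite transvection_shift // addrC subrK.
move=> e eJ; apply: transvection_fix; rewrite /dotF2 big1 // => j _.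
by case: (boolP (j \in J)) => [/eJ ->|/hJ ->]; rewrite ?mulr0 ?mul0r.
Qed.

Lemma std_flat_transitive k (p q : vec) : p \notin std_flat k -> q \notin std_flat k ->
  exists2 P, P \in unitmx & affine_image P 0 (std_flat k) = std_flat k /\ q *m P = p.
Proof.
pose J := [set j : 'I_n | n - k <= j]%N.
have outJ (u : vec) : u \notin std_flat k -> exists2 j, j \in J & u 0 j = 1.
  rewrite mem_std_flat negb_forall => /existsP [j]; rewrite negb_imply => /andP [jJ uj].
  by exists j; rewrite ?inE //; case: (F2P (u 0 j)) uj => ->.
move=> /outJ pJ /outJ qJ; have [P Pu [Pfix qP]] := exists_unitmx_fixing pJ qJ.
have inJ (e : vec) : e \in std_flat k -> forall j, j \in J -> e 0 j = 0.
  by rewrite mem_std_flat => /forallP e0 j; rewrite inE => jJ; apply/eqP/(implyP (e0 j)).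
exists P => //; split => //; apply/setP => z; rewrite [in LHS]inE subr0.
apply/idP/idP => zE; last by rewrite -{1}(Pfix _ (inJ _ zE)) mulmxK.
by have := Pfix _ (inJ _ zE); rewrite mulmxKV // => ->.
Qed.

End Flats.

Section SolutionFlats.
Variables n k : nat.
Local Notation vec := 'rV['F_2]_n.
Implicit Types (a c x : vec) (b : 'F_2) (g : k.-1.-tuple vec) (bt : k.-1.-tuple 'F_2).

Definition lform a g i : vec := nth 0 (rcons (tval g) a) i.
Definition lrhs b bt i : 'F_2 := nth 0 (rcons (tval bt) (1 - b)) i.

Definition sol_flat a b g bt : {set vec} :=
  [set y | [forall i : 'I_k, dotF2 (lform a g i) y == lrhs b bt i]].

Definition form_mx a g : 'M['F_2]_(k, n) := \matrix_(i, j) lform a g i 0 j.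

Lemma indep_okE a g : indep_ok a g = row_free (form_mx a g).
Proof. by []. Qed.

Lemma Vj_sol_flat a b g bt (s : {perm 'I_k}) : Vj a b g bt s = sol_flat a b g bt.
Proof.
apply/setP => y; rewrite !inE; apply/forallP/forallP => [yV i|yV i]; last exact: yV.
by have := yV (s^-1 i)%g; rewrite permKV.
Qed.

Lemma sol_flatE a b g bt :
  sol_flat a b g bt = [set y | y *m (form_mx a g)^T == \row_i lrhs b bt i].
Proof.
apply/setP => y; rewrite !inE; apply/forallP/eqP => [yV|yV i].
  apply/rowP => i; rewrite !mxE -(eqP (yV i)).
  by apply: eq_bigr => j _; rewrite !mxE mulrC.
have := congr1 (fun v : 'rV_k => v 0 i) yV; rewrite !mxE => <-; apply/eqP.
by apply: eq_bigr => j _; rewrite !mxE mulrC.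
Qed.

Lemma sol_flat_kflat a b g bt : indep_ok a g -> is_kflat k (sol_flat a b g bt).
Proof.
rewrite indep_okE => /eqP rk_form; set M := form_mx a g; pose r : 'rV_k := \row_i lrhs b bt i.
have fullMT : row_full M^T by rewrite /row_full mxrank_tr rk_form.
pose y0 := r *m pinvmx M^T.
have y0M : y0 *m M^T = r by rewrite mulmxKpV // submx_full.
apply/existsP; exists y0; apply/existsP; exists (kermx M^T).
rewrite mxrank_ker mxrank_tr rk_form eqxx /=; apply/eqP/setP => y.
rewrite sol_flatE inE; apply/eqP/imsetP => [yM|[u]].
  exists (y - y0); last by rewrite addrC subrK.
  by rewrite inE sub_kermx mulmxBl yM y0M subrr.
by rewrite inE sub_kermx => /eqP uM ->; rewrite mulmxDl uM y0M addr0.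
Qed.

Lemma notin_sol_flat a x g bt : (0 < k)%N -> x \notin sol_flat a (dotF2 a x) g bt.
Proof.
move=> k0; have lt_k : (k.-1 < k)%N by rewrite ltn_predL.
rewrite inE negb_forall; apply/existsP; exists (Ordinal lt_k).
rewrite /lform /lrhs /= !nth_rcons !size_tuple ltnn eqxx.
by case: (F2P (dotF2 a x)) => ->.
Qed.

Lemma unitmx_with_row (i : 'I_n) a : a != 0 -> exists2 P, P \in unitmx & row i P = a.
Proof.
have nz1 (u : vec) : u != 0 -> exists2 j, j \in [set: 'I_n] & u 0 j = 1.
  move=> u0; have /existsP [j uj] : [exists j, u 0 j != 0].
    apply: contraNT u0 => /existsPn u0j; apply/eqP/rowP => j.
    by rewrite mxE; apply/eqP/negbNE/u0j.
  by exists j; rewrite ?inE //; case: (F2P (u 0 j)) uj => ->.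
move=> /nz1 aJ; have /nz1 eJ : 'e_i != 0 :> vec by apply/eqP/rowP => /(_ i); rewrite !mxE !eqxx.
by have [P Pu [_ eP]] := exists_unitmx_fixing aJ eJ; exists P; rewrite // rowE.
Qed.

Lemma gamma_set_neq0 a : (0 < k)%N -> (k <= n)%N -> a != 0 -> gamma_set k a != set0.
Proof.
move=> k0 kn a0; have lt_kn : (k.-1 < n)%N by rewrite (leq_trans _ kn) // ltn_predL.
have [P Pu Pa] := unitmx_with_row (Ordinal lt_kn) a0.
pose g := [tuple row (widen_ord (ltnW lt_kn) j) P | j < k.-1].
have gP (i : 'I_k) : lform a g i = row (widen_ord kn i) P.
  rewrite /lform nth_rcons size_tuple; case: ltnP => [lt_ik|le_ki].
    by rewrite -(tnth_nth 0 g (Ordinal lt_ik)) tnth_mktuple; congr (row _ P); apply/val_inj.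
  have ik : i = k.-1 :> nat by apply/eqP; rewrite eqn_leq le_ki andbT -ltnS prednK.
  by rewrite ik eqxx -Pa; congr (row _ P); apply/val_inj.
have pidE : rowsub (widen_ord kn) 1%:M = pid_mx k :> 'M['F_2]_(k, n).
  by apply/matrixP => i j; rewrite !mxE ltn_ord andbT.
apply/set0Pn; exists g; rewrite inE indep_okE.
have -> : form_mx a g = rowsub (widen_ord kn) P by apply/matrixP => i j; rewrite !mxE gP mxE.
by rewrite /row_free rowsubE pidE mxrankMfree ?row_free_unit // rank_pid_mx.
Qed.

End SolutionFlats.

Section Equivariance.
Variables n k : nat.
Local Notation vec := 'rV['F_2]_n.
Implicit Types (a c : vec) (b : 'F_2) (g : k.-1.-tuple vec) (bt : k.-1.-tuple 'F_2).
Implicit Types (P Q : 'M['F_2]_n).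

Definition map_forms Q g : k.-1.-tuple vec := map_tuple (fun u => u *m Q) g.

Definition shift_rhs g c bt : k.-1.-tuple 'F_2 :=
  [tuple tnth bt i + dotF2 (tnth g i) c | i < k.-1].

Lemma lform_map Q a g i : lform (a *m Q) (map_forms Q g) i = lform a g i *m Q.
Proof.
rewrite /lform /= -map_rcons; case: (ltnP i (size (rcons g a))) => lt_i.
  by rewrite (nth_map 0).
by rewrite !nth_default ?size_map // mul0mx.
Qed.

Lemma lrhs_shift a b c g bt (i : 'I_k) :
  lrhs (b + dotF2 a c) (shift_rhs g c bt) i = lrhs b bt i + dotF2 (lform a g i) c.
Proof.
rewrite /lrhs /lform !nth_rcons !size_tuple; case: ltnP => [lt_ik|le_ki].
  by rewrite -!(tnth_nth 0 _ (Ordinal lt_ik)) tnth_mktuple.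
have ik : i = k.-1 :> nat.
  by apply/eqP; rewrite eqn_leq le_ki andbT -ltnS prednK // (leq_ltn_trans _ (ltn_ord i)).
by rewrite ik eqxx opprD !oppr_pchar2 ?pchar_F2 // addrA.
Qed.

Lemma sol_flat_affine P c a b g bt : P \in unitmx ->
  sol_flat (a *m (invmx P)^T) (b + dotF2 (a *m (invmx P)^T) c) (map_forms (invmx P)^T g)
    (shift_rhs (map_forms (invmx P)^T g) c bt)
  = affine_image P c (sol_flat a b g bt).
Proof.
move=> Pu; apply/setP => z; rewrite !inE; apply: eq_forallb => i.
by rewrite lrhs_shift lform_map dotF2_mulmxr dotF2Br -subr_eq.
Qed.

Lemma indep_ok_map Q a g : Q \in unitmx -> indep_ok (a *m Q) (map_forms Q g) = indep_ok a g.
Proof.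
move=> Qu; rewrite !indep_okE; have -> : form_mx (a *m Q) (map_forms Q g) = form_mx a g *m Q.
  apply/matrixP => i j; rewrite !mxE lform_map mxE.
  by apply: eq_bigr => l _; rewrite !mxE.
by rewrite /row_free mxrankMfree ?row_free_unit.
Qed.

Lemma map_formsK Q : Q \in unitmx -> cancel (map_forms Q) (map_forms (invmx Q)).
Proof. by move=> Qu g; apply: eq_from_tnth => i; rewrite !tnth_map mulmxK. Qed.

Lemma shift_rhsK g c : involutive (shift_rhs g c).
Proof.
by move=> bt; apply: eq_from_tnth => i; rewrite !tnth_mktuple -addrA addrr_pchar2 ?pchar_F2 ?addr0.
Qed.

End Equivariance.

Section Mixture.
Variables (R : numFieldType) (I S : finType).

Lemma sum_mixture (mu : I -> R) (K : I -> S -> R) :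
  \sum_i mu i = 1 -> (forall i, mu i != 0 -> \sum_s K i s = 1) ->
  \sum_s \sum_i mu i * K i s = 1.
Proof.
move=> mu1 K1; rewrite exchange_big -[RHS]mu1; apply: eq_bigr => i _.
rewrite -mulr_sumr; have [->|/K1 ->] := eqVneq (mu i) 0; first by rewrite mul0r.
by rewrite mulr1.
Qed.

Lemma sum_indicator (v : S) : \sum_s ((v == s)%:R : R) = 1.
Proof. by rewrite (bigD1 v) //= eqxx big1 ?addr0 // => s /negPf; rewrite eq_sym => ->. Qed.

End Mixture.

Section Laws.
Variables (R : numFieldType) (n k : nat).
Local Notation vec := 'rV['F_2]_n.
Implicit Types (a c x : vec) (b e : 'F_2) (W : {set vec}) (P : 'M['F_2]_n).

Definition flat_law a b W : R :=
  \sum_(g : k.-1.-tuple vec) @unif R _ (gamma_set k a) g *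
    \sum_(bt : k.-1.-tuple 'F_2) @unif R _ [set: k.-1.-tuple 'F_2] bt *
      (sol_flat a b g bt == W)%:R.

Definition planted_law x e W : R :=
  \sum_a @unif R _ (nonzero_vecs n) a * flat_law a (dotF2 a x + e) W.

Lemma flat_law_affine P c a b W : P \in unitmx ->
  flat_law (a *m (invmx P)^T) (b + dotF2 (a *m (invmx P)^T) c) (affine_image P c W)
  = flat_law a b W.
Proof.
move=> Pu; set Q := (invmx P)^T; have Qu : Q \in unitmx by rewrite unitmx_tr unitmx_inv.
rewrite /flat_law (reindex_inj (can_inj (map_formsK Qu))); apply: eq_bigr => g _.
have gammaQ : map_forms Q @^-1: gamma_set k (a *m Q) = gamma_set k a.
  by apply/setP => g'; rewrite !inE indep_ok_map.
rewrite (unif_preimset _ _ (can_inj (map_formsK Qu)) gammaQ); congr (_ * _).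
rewrite (reindex_inj (inv_inj (shift_rhsK (map_forms Q g) c))); apply: eq_bigr => bt _.
by rewrite sol_flat_affine // (inj_eq (affine_image_inj Pu)) /unif !inE.
Qed.

Lemma flat_law_not_kflat a b W : ~~ is_kflat k W -> flat_law a b W = 0.
Proof.
move=> Wflat; rewrite /flat_law big1 // => g _; rewrite /unif inE.
case: ifP => [g_ok|_]; last by rewrite mul0r.
rewrite big1 ?mulr0 // => bt _; case: eqP => [VW|_]; last by rewrite mulr0.
by move: Wflat; rewrite -VW sol_flat_kflat.
Qed.

Lemma flat_law_mem a x W : (0 < k)%N -> x \in W -> flat_law a (dotF2 a x) W = 0.
Proof.
move=> k0 xW; rewrite /flat_law big1 // => g _; rewrite big1 ?mulr0 // => bt _.
case: eqP => [VW|_]; last by rewrite mulr0.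
by move: xW; rewrite -VW (negPf (notin_sol_flat _ _ g bt k0)).
Qed.

Lemma sum_flat_law a b : (0 < k)%N -> (k <= n)%N -> a != 0 -> \sum_W flat_law a b W = 1.
Proof.
move=> k0 kn a0; apply: sum_mixture => [|g _]; first by rewrite sum_unif ?gamma_set_neq0.
apply: sum_mixture => [|bt _]; last exact: sum_indicator.
by rewrite sum_unif //; apply/set0Pn; exists [tuple of nseq k.-1 (0 : 'F_2)]; rewrite inE.
Qed.

Lemma nonzero_vecs_mulmx (Q : 'M['F_2]_n) :
  Q \in unitmx -> (fun a => a *m Q) @^-1: nonzero_vecs n = nonzero_vecs n.
Proof. by move=> Qu; apply/setP => a; rewrite !inE mulmx_free_eq0 ?row_free_unit. Qed.

Lemma planted_law_affine P c x e W : P \in unitmx ->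
  planted_law (x *m P + c) e (affine_image P c W) = planted_law x e W.
Proof.
move=> Pu; set Q := (invmx P)^T; have Qu : Q \in unitmx by rewrite unitmx_tr unitmx_inv.
have mulQ_inj : injective (fun a : vec => a *m Q) by apply: can_inj (mulmxK Qu).
rewrite /planted_law (reindex_inj mulQ_inj); apply: eq_bigr => a _ /=.
rewrite (unif_preimset _ _ mulQ_inj (nonzero_vecs_mulmx Qu)); congr (_ * _).
have aQxP : dotF2 (a *m Q) (x *m P) = dotF2 a x.
  by rewrite dotF2_mulmxr -mulmxA -trmx_mul mulmxV // trmx1 mulmx1.
by rewrite dotF2Dr aQxP addrAC flat_law_affine.
Qed.

Lemma planted_law_not_kflat x e W : ~~ is_kflat k W -> planted_law x e W = 0.
Proof. by move=> Wflat; rewrite /planted_law big1 // => a _; rewrite flat_law_not_kflat ?mulr0. Qed.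

Lemma planted_law_mem x W : (0 < k)%N -> x \in W -> planted_law x 0 W = 0.
Proof. by move=> k0 xW; rewrite /planted_law big1 // => a _; rewrite addr0 flat_law_mem ?mulr0. Qed.

Lemma sum_planted_law x e : (0 < k)%N -> (k <= n)%N -> \sum_W planted_law x e W = 1.
Proof.
move=> k0 kn; have n0 : (0 < n)%N := leq_trans k0 kn.
rewrite /planted_law; apply: sum_mixture => [|a]; last first.
  rewrite /unif inE; case: ifP => [a0 _|_]; [exact: sum_flat_law | by rewrite eqxx].
apply: sum_unif; apply/set0Pn; exists 'e_(Ordinal n0); rewrite inE.
by apply/eqP => /rowP /(_ (Ordinal n0)); rewrite !mxE !eqxx.
Qed.

End Laws.

Section LawValues.
Variables (R : numFieldType) (n k : nat).
Hypotheses (k_gt0 : (0 < k)%N) (le_kn : (k <= n)%N).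
Local Notation vec := 'rV['F_2]_n.
Implicit Types (x : vec) (W : {set vec}).

(* the law of V_j in scenario (i), the permutation being irrelevant *)
Definition null_law W : R :=
  \sum_(a : vec) \sum_(b : 'F_2)
    @unif R _ (nonzero_vecs n) a * @unif R _ [set: 'F_2] b * flat_law R k a b W.

Lemma planted_law_qx x W : planted_law R k x 0 W = @qx R n k x W.
Proof.
have lt_n1 : (n.-1 < n)%N by rewrite ltn_predL (leq_trans k_gt0 le_kn).
pose p0 : vec := 'e_(Ordinal lt_n1).
have p0_out : p0 \notin std_flat n k.
  rewrite mem_std_flat negb_forall; apply/existsP; exists (Ordinal lt_n1).
  by rewrite /= !mxE !eqxx -subn1 leq_sub2l.
apply: (unif_const (c := planted_law R k p0 0 (std_flat n k))) W; last exact: sum_planted_law.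
move=> V; rewrite !inE; have [Vflat|Vnot] /= := boolP (is_kflat k V); last first.
  exact: planted_law_not_kflat.
have [xV|xV] /= := boolP (x \in V); first exact: planted_law_mem.
have [P Pu [c VE]] := kflat_affine_std Vflat.
pose x0 := (x - c) *m invmx P.
have -> : x = x0 *m P + c by rewrite mulmxKV // subrK.
have x0_out : x0 \notin std_flat n k by move: xV; rewrite VE inE.
rewrite VE planted_law_affine //.
have [P2 P2u [P2std <-]] := std_flat_transitive x0_out p0_out.
by rewrite -{1}P2std -[p0 *m P2]addr0 planted_law_affine.
Qed.

Lemma null_law_avg x W :
  null_law W = 2^-1 * (planted_law R k x 0 W + planted_law R k x 1 W).
Proof.
rewrite /null_law /planted_law -big_split mulr_sumr; apply: eq_bigr => a _.
rewrite (reindex_inj (inv_inj (addrK_pchar2 pchar_F2 (dotF2 a x)))) /=.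
by rewrite sum_F2 !unif_F2 (addrC 0) (addrC 1); ring.
Qed.

Lemma null_law_q0 W : null_law W = @q0 R n k W.
Proof.
apply: (unif_const (c := null_law (std_flat n k))) W => [V|]; last first.
  rewrite (eq_bigr _ (fun V _ => null_law_avg 0 V)) -mulr_sumr big_split /=.
  by rewrite !sum_planted_law // -[1 + 1]/(2%:R) mulVf ?pnatr_eq0.
rewrite inE; have [Vflat|Vnot] /= := boolP (is_kflat k V); last first.
  by rewrite (null_law_avg 0) !planted_law_not_kflat ?addr0 ?mulr0.
have [P Pu [c ->]] := kflat_affine_std Vflat.
have planted_c e : planted_law R k c e (affine_image P c (std_flat n k))
    = planted_law R k 0 e (std_flat n k).
  by rewrite -(planted_law_affine _ _ c 0 e _ Pu) mul0mx add0r.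
by rewrite (null_law_avg c) (null_law_avg 0) !planted_c.
Qed.

Lemma bern_planted_law x (eta : R) W :
  \sum_e bern eta e * planted_law R k x e W = @qxpi R n k x (1 - 2 * eta) W.
Proof.
have avg := null_law_avg x W; rewrite null_law_q0 planted_law_qx in avg.
have pl1 : planted_law R k x 1 W = 2 * @q0 R n k W - @qx R n k x W.
  by rewrite avg mulrA mulfV ?pnatr_eq0 // mul1r addrAC subrr add0r.
rewrite sum_F2 /bern eqxx (_ : (0 : 'F_2) == 1 = false) //.
by rewrite planted_law_qx pl1 /qxpi; ring.
Qed.

End LawValues.

Section FfunProducts.
Variable R : numFieldType.

Lemma forall_natr_prod (I : finType) (B : pred I) :
  (([forall i, B i] : bool)%:R : R) = \prod_i (B i)%:R.
Proof.
have [/forallP Ball|/forallPn [i Bi]] := boolP [forall i, B i].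
  by rewrite big1 // => i _; rewrite Ball.
by rewrite (bigD1 i) //= (negPf Bi) mul0r.
Qed.

Lemma sum_ffun5_prod (I T1 T2 T3 T4 T5 : finType) (F : I -> T1 -> T2 -> T3 -> T4 -> T5 -> R) :
  \sum_(f1 : {ffun I -> T1}) \sum_(f2 : {ffun I -> T2}) \sum_(f3 : {ffun I -> T3})
  \sum_(f4 : {ffun I -> T4}) \sum_(f5 : {ffun I -> T5})
    \prod_i F i (f1 i) (f2 i) (f3 i) (f4 i) (f5 i)
  = \prod_i \sum_x1 \sum_x2 \sum_x3 \sum_x4 \sum_x5 F i x1 x2 x3 x4 x5.
Proof.
rewrite bigA_distr_bigA; apply: eq_bigr => f1 _; rewrite bigA_distr_bigA.
apply: eq_bigr => f2 _; rewrite bigA_distr_bigA; apply: eq_bigr => f3 _.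
by rewrite bigA_distr_bigA; apply: eq_bigr => f4 _; rewrite bigA_distr_bigA.
Qed.

Lemma sum_ffun5_prod_forall (I T1 T2 T3 T4 T5 : finType)
    (F : I -> T1 -> T2 -> T3 -> T4 -> T5 -> R) (B : I -> T1 -> T2 -> T3 -> T4 -> T5 -> bool) :
  \sum_(f1 : {ffun I -> T1}) \sum_(f2 : {ffun I -> T2}) \sum_(f3 : {ffun I -> T3})
  \sum_(f4 : {ffun I -> T4}) \sum_(f5 : {ffun I -> T5})
    (\prod_i F i (f1 i) (f2 i) (f3 i) (f4 i) (f5 i))
    * ([forall i, B i (f1 i) (f2 i) (f3 i) (f4 i) (f5 i)] : bool)%:R
  = \prod_i \sum_x1 \sum_x2 \sum_x3 \sum_x4 \sum_x5 F i x1 x2 x3 x4 x5 * (B i x1 x2 x3 x4 x5)%:R.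
Proof.
rewrite -sum_ffun5_prod; do 5!(apply: eq_bigr => ? _).
by rewrite forall_natr_prod -big_split.
Qed.

End FfunProducts.

Section Coordinate.
Variables (R : numFieldType) (n k : nat).
Hypotheses (k_gt0 : (0 < k)%N) (le_kn : (k <= n)%N).
Local Notation vec := 'rV['F_2]_n.
Local Notation tuples T := (k.-1.-tuple T).

Lemma sum_Vj_flat_law (w : R) a b W :
  \sum_(g : tuples vec) \sum_(bt : tuples 'F_2) \sum_(s : {perm 'I_k})
    (w * @unif R _ (gamma_set k a) g * @unif R _ [set: tuples 'F_2] bt
       * @unif R _ [set: {perm 'I_k}] s) * (Vj a b g bt s == W)%:R
  = w * flat_law R k a b W.
Proof.
rewrite /flat_law mulr_sumr; apply: eq_bigr => g _; rewrite !mulr_sumr; apply: eq_bigr => bt _.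
have perm1 : \sum_(s : {perm 'I_k}) @unif R _ [set: {perm 'I_k}] s = 1.
  by apply: sum_unif; apply/set0Pn; exists 1%g; rewrite inE.
rewrite -[RHS]mulr1 -perm1 mulr_sumr; apply: eq_bigr => s _.
by rewrite Vj_sol_flat; ring.
Qed.

Lemma coord_law_i W :
  \sum_(a : vec) \sum_(b : 'F_2) \sum_(g : tuples vec) \sum_(bt : tuples 'F_2)
  \sum_(s : {perm 'I_k})
    (@unif R _ (nonzero_vecs n) a * @unif R _ [set: 'F_2] b
       * @unif R _ (gamma_set k a) g * @unif R _ [set: tuples 'F_2] bt
       * @unif R _ [set: {perm 'I_k}] s) * (Vj a b g bt s == W)%:R
  = @q0 R n k W.
Proof.
rewrite -null_law_q0 //; apply: eq_bigr => a _; apply: eq_bigr => b _.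
exact: sum_Vj_flat_law.
Qed.

Lemma coord_law_ii x (eta : R) W :
  \sum_(a : vec) \sum_(e : 'F_2) \sum_(g : tuples vec) \sum_(bt : tuples 'F_2)
  \sum_(s : {perm 'I_k})
    (@unif R _ (nonzero_vecs n) a * bern eta e
       * @unif R _ (gamma_set k a) g * @unif R _ [set: tuples 'F_2] bt
       * @unif R _ [set: {perm 'I_k}] s) * (Vj a (dotF2 a x + e) g bt s == W)%:R
  = @qxpi R n k x (1 - 2 * eta) W.
Proof.
rewrite -bern_planted_law // /planted_law exchange_big; apply: eq_bigr => e _.
rewrite mulr_sumr; apply: eq_bigr => a _; rewrite sum_Vj_flat_law; ring.
Qed.

End Coordinate.

Section Product.
Variables (R : numFieldType) (n k m : nat).
Hypotheses (k_gt0 : (0 < k)%N) (le_kn : (k <= n)%N).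
Local Notation vec := 'rV['F_2]_n.
Local Notation tuples T := (k.-1.-tuple T).
Implicit Types (W : {ffun 'I_m -> {set vec}}).

Lemma law_i_P_unif W : @law_i R n k m W = @P_unif R n k m W.
Proof.
rewrite /law_i (sum_ffun5_prod_forall
  (fun _ (a : vec) (b : 'F_2) (g : tuples vec) (bt : tuples 'F_2) (s : {perm 'I_k}) =>
     @unif R _ (nonzero_vecs n) a * @unif R _ [set: 'F_2] b * @unif R _ (gamma_set k a) g
     * @unif R _ [set: tuples 'F_2] bt * @unif R _ [set: {perm 'I_k}] s)
  (fun j a b g bt s => Vj a b g bt s == W j)).
by apply: eq_bigr => j _; apply: coord_law_i.
Qed.

Lemma law_ii_P_xpi x (eta : R) W :
  @law_ii R n k m x eta W = @P_xpi R n k m x (1 - 2 * eta) W.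
Proof.
rewrite /law_ii (sum_ffun5_prod_forall
  (fun _ (a : vec) (e : 'F_2) (g : tuples vec) (bt : tuples 'F_2) (s : {perm 'I_k}) =>
     @unif R _ (nonzero_vecs n) a * bern eta e * @unif R _ (gamma_set k a) g
     * @unif R _ [set: tuples 'F_2] bt * @unif R _ [set: {perm 'I_k}] s)
  (fun j a e g bt s => Vj a (dotF2 a x + e) g bt s == W j)).
by apply: eq_bigr => j _; apply: coord_law_ii.
Qed.

End Product.

Theorem mainTheorem11 (R : realFieldType) (n k m : nat)
  (hk : (1 <= k)%N) (hkn : (k <= n)%N) (hm : (1 <= m)%N) :
  (forall W : {ffun 'I_m -> {set 'rV['F_2]_n}}, @law_i R n k m W = @P_unif R n k m W) /\
  (forall (x : 'rV['F_2]_n) (eta : R), 0 <= eta -> eta < 1 / 2 ->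
     forall W : {ffun 'I_m -> {set 'rV['F_2]_n}},
       @law_ii R n k m x eta W = @P_xpi R n k m x (1 - 2 * eta) W).
Proof.
split=> [W|x eta _ _ W]; first exact: law_i_P_unif.
exact: law_ii_P_xpi.
Qed.
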